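(* Let $0 < \gamma \le 1/2$, let $(x,z)$ be an optimal extreme point solution of LP-CVRP-MD, let $\delta$ be defined by $\sum_{r \in R}\sum_{v \in C} 2\,c(v,r)\,z^r_{v,v} = (1-\delta)\,\mathrm{opt}_{LP}$, and let $\mathcal P$ be the random collection of paths produced by the sampling procedure described in the context. Then $\mathbb E\left[\sum_{P \in \mathcal P} c(P)\right] \le \gamma\,(1+\delta)\,\mathrm{opt}_{LP}$.
   Context: Problem: nonempty disjoint finite sets $C$ (clients) and $R$ (depots), $V = C\cup R$, a metric $c$ on $V$, integer capacity $k \ge 3$; it is assumed $c(v,R) := \min_{r\in R} c(v,r) > 0$ for every client $v$. Work in the complete bidirected graph on $V$ (directed edges $(a,b)$ of cost $c(a,b)$); for a vector $y$ on directed edges and $S\subseteq V$, $y(\delta^{in}(S))$, $y(\delta^{out}(S))$ are sums over edges entering/leaving $S$. LP-CVRP-MD has variables $x^r_{v,e}\ge 0$ ($r\in R$, $v\in C$, $e$ a directed edge) and $z^r_{v,u}\ge0$ ($r\in R$, $v\in C$, $u\in V$), objective: minimize $\sum_{r,v,e} c(e)x^r_{v,e}$, constraints: (1) $x^r_v(\delta^{out}(u))$ is $2z^r_{v,v}$ if $u=r$, $0$ if $u=v$, $z^r_{v,u}$ otherwise; (2) $x^r_v(\delta^{in}(u))$ is $0$ if $u=r$, $2z^r_{v,v}$ if $u=v$, $z^r_{v,u}$ otherwise (for all $r\in R,v\in C,u\in V$); (3) $x^r_v(\delta^{in}(S))\ge z^r_{v,u}$ whenever $u\in S\subseteq V\setminus\{r\}$;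 (4) $\sum_{r\in R}\sum_{v\in C} z^r_{v,u}=1$ for all $u\in C$; (5) $z^r_{v,u}\le z^r_{v,v}$ for $u,v\in C$; (6) $z^r_{v,u}=0$ if $u,v\in C$ and $c(u,r)>c(v,r)$; (7) $\sum_{u\in C}z^r_{v,u}\le k z^r_{v,v}$. $\mathrm{opt}_{LP}$ is its optimum value. An $r$-branching is a tree rooted at $r$ oriented away from $r$ (not necessarily spanning). Sampling procedure: for each $r\in R$, $v\in C$, take $r$-branchings $B_1,B_2,\dots$ (finitely many) with weights $\mu_i\ge 0$, $\sum_i\mu_i = K_{r,v} := 2\gamma z^r_{v,v}$, such that every directed edge $e$ lies in branchings of total weight at most $\gamma x^r_{v,e}$, $v$ lies on every $B_i$, and every client $u\ne v$ lies in branchings of total weight at least $\gamma z^r_{v,u}$ (such a decomposition exists by a theorem of Bang-Jensen, Frank and Jackson applied to the preflow $\gamma x^r_v$). Independently include each $B_i$ with probability $\mu_i$. For each included branching $B$, form an $r$–$v$ path $P(B)$ by adding the reverse of every edge of $B$ not on the $r$–$v$ path of $B$ and shortcutting the resulting Eulerian $r$–$v$ walk past repeated vertices. Then, while some client lies on two of these paths, remove it from one of them (by shortcutting past it, or truncating the path just before it if it is the last vertex), and discard paths containing no client. $\mathcal P$ is the resulting collection of paths; $c(P)$ is the total edge cost of a path $P$. *)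

From HB Require Import structures.
From mathcomp Require Import all_boot all_order all_algebra.
Set Implicit Arguments. Unset Strict Implicit. Unset Printing Implicit Defensive.
Import Order.TTheory GRing.Theory Num.Theory.
Local Open Scope ring_scope.

(* Vertex set V = C + R : clients are [inl v], depots are [inr r]. *)
Notation vtx Cl Dp := (Cl + Dp)%type.

Definition is_client (Cl Dp : finType) (w : vtx Cl Dp) : bool :=
  if w is inl _ then true else false.

Definition is_metric (T : finType) (F : realFieldType) (c : T -> T -> F) : Prop :=
  (forall a b, 0 <= c a b) /\ (forall a b, c a b = 0 <-> a = b) /\
  (forall a b, c a b = c b a) /\ (forall a b d, c a d <= c a b + c b d).

Definition out_sum (T : finType) (F : realFieldType) (y : T * T -> F) (u : T) : F :=
  \sum_(w : T | w != u) y (u, w).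
Definition in_sum (T : finType) (F : realFieldType) (y : T * T -> F) (u : T) : F :=
  \sum_(w : T | w != u) y (w, u).
Definition cut_in (T : finType) (F : realFieldType) (y : T * T -> F) (S : {set T}) : F :=
  \sum_(e : T * T | (e.1 \notin S) && (e.2 \in S)) y e.

(* LP-CVRP-MD.  Variables x^r_{v,e} = x r v e (e a directed edge; the loop
   coordinates (a,a) are not edges and are fixed to 0), z^r_{v,u} = z r v u. *)
Definition lp_feasible (Cl Dp : finType) (F : realFieldType)
  (c : vtx Cl Dp -> vtx Cl Dp -> F) (k : nat)
  (x : Dp -> Cl -> vtx Cl Dp * vtx Cl Dp -> F) (z : Dp -> Cl -> vtx Cl Dp -> F) : Prop :=
  (forall r v e, 0 <= x r v e) /\
  (forall r v u, 0 <= z r v u) /\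
  (forall r v a, x r v (a, a) = 0) /\
  (forall r v u, out_sum (x r v) u =
     if u == inr r then 2 * z r v (inl v) else if u == inl v then 0 else z r v u) /\
  (forall r v u, in_sum (x r v) u =
     if u == inr r then 0 else if u == inl v then 2 * z r v (inl v) else z r v u) /\
  (forall r v (S : {set vtx Cl Dp}) u, u \in S -> inr r \notin S ->
     z r v u <= cut_in (x r v) S) /\
  (forall u : Cl, \sum_(r : Dp) \sum_(v : Cl) z r v (inl u) = 1) /\
  (forall r v (u : Cl), z r v (inl u) <= z r v (inl v)) /\
  (forall r v (u : Cl), c (inl v) (inr r) < c (inl u) (inr r) -> z r v (inl u) = 0) /\
  (forall r v, \sum_(u : Cl) z r v (inl u) <= k%:R * z r v (inl v)).

Definition lp_obj (Cl Dp : finType) (F : realFieldType)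
  (c : vtx Cl Dp -> vtx Cl Dp -> F)
  (x : Dp -> Cl -> vtx Cl Dp * vtx Cl Dp -> F) : F :=
  \sum_(r : Dp) \sum_(v : Cl) \sum_(e : vtx Cl Dp * vtx Cl Dp | e.1 != e.2)
     c e.1 e.2 * x r v e.

Definition lp_optimal (Cl Dp : finType) (F : realFieldType)
  (c : vtx Cl Dp -> vtx Cl Dp -> F) (k : nat)
  (x : Dp -> Cl -> vtx Cl Dp * vtx Cl Dp -> F) (z : Dp -> Cl -> vtx Cl Dp -> F) : Prop :=
  lp_feasible c k x z /\
  forall x' z', lp_feasible c k x' z' -> lp_obj c x <= lp_obj c x'.

Definition lp_extreme (Cl Dp : finType) (F : realFieldType)
  (c : vtx Cl Dp -> vtx Cl Dp -> F) (k : nat)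
  (x : Dp -> Cl -> vtx Cl Dp * vtx Cl Dp -> F) (z : Dp -> Cl -> vtx Cl Dp -> F) : Prop :=
  lp_feasible c k x z /\
  forall x1 z1 x2 z2 (t : F),
    lp_feasible c k x1 z1 -> lp_feasible c k x2 z2 -> 0 < t < 1 ->
    (forall r v e, x r v e = t * x1 r v e + (1 - t) * x2 r v e) ->
    (forall r v u, z r v u = t * z1 r v u + (1 - t) * z2 r v u) ->
    (forall r v e, x1 r v e = x2 r v e) /\ (forall r v u, z1 r v u = z2 r v u).

Definition edge_rel (T : finType) (E : {set T * T}) : rel T := fun a b => (a, b) \in E.

Definition bvert (T : finType) (r : T) (E : {set T * T}) : {set T} :=
  r |: ([set e.1 | e in E] :|: [set e.2 | e in E]).

(* E is an r-branching: a tree containing r, oriented away from r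
   (no loops, r has in-degree 0, other vertices in-degree 1, all reachable from r) *)
Definition is_branching (T : finType) (r : T) (E : {set T * T}) : Prop :=
  (forall e, e \in E -> e.1 != e.2) /\
  (forall e, e \in E -> e.2 != r) /\
  (forall e1 e2, e1 \in E -> e2 \in E -> e1.2 = e2.2 -> e1 = e2) /\
  (forall w, w \in bvert r E -> connect (edge_rel E) r w).

(* edges of the r-v path of the branching E *)
Definition bpath_edges (T : finType) (v : T) (E : {set T * T}) : {set T * T} :=
  [set e in E | connect (edge_rel E) e.2 v].

Definition bwalk_edges (T : finType) (v : T) (E : {set T * T}) : seq (T * T) :=
  enum E ++ [seq (e.2, e.1) | e <- enum (E :\: bpath_edges v E)].

(* p is P(B): obtained from an Eulerian r-v walk r :: s of the multigraph
   bwalk_edges by shortcutting past repeated vertices (keeping r first and v last) *)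
Definition is_PB (T : finType) (r v : T) (E : {set T * T}) (p : seq T) : Prop :=
  exists s : seq T,
    [/\ last r s = v, perm_eq (zip (r :: s) s) (bwalk_edges v E),
        subseq p (r :: s), uniq p & {subset r :: s <= p}] /\
    head r p = r /\ last r p = v.

Definition pcost (T : finType) (F : realFieldType) (c : T -> T -> F) (p : seq T) : F :=
  \sum_(e <- zip p (behead p)) c e.1 e.2.

(* one removal step: a client u lies on paths i <> j; remove it from path i
   (shortcutting past it, or truncating if it is the last vertex) *)
Definition rm_step (Cl Dp : finType) (Q Q' : seq (seq (vtx Cl Dp))) : Prop :=
  exists (u : Cl) (i j : nat),
    [/\ (i < size Q)%N, (j < size Q)%N, i != j,
        inl u \in nth [::] Q i & inl u \in nth [::] Q j] /\
    Q' = set_nth [::] Q i (rem (inl u) (nth [::] Q i)).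

Inductive rm_reach (Cl Dp : finType) : seq (seq (vtx Cl Dp)) -> seq (seq (vtx Cl Dp)) -> Prop :=
| rm_refl Q : rm_reach Q Q
| rm_next Q Q' Q'' : rm_step Q Q' -> rm_reach Q' Q'' -> rm_reach Q Q''.

Definition no_shared_client (Cl Dp : finType) (Q : seq (seq (vtx Cl Dp))) : Prop :=
  forall (u : Cl) (i j : nat), (i < size Q)%N -> (j < size Q)%N ->
    inl u \in nth [::] Q i -> inl u \in nth [::] Q j -> i = j.

Definition final_coll (Cl Dp : finType) (Q0 Qf : seq (seq (vtx Cl Dp))) : Prop :=
  exists Q, rm_reach Q0 Q /\ no_shared_client Q /\
            Qf = [seq p <- Q | has (@is_client Cl Dp) p].

(* The branching family: indexed by a finite type I; branching i belongs to the
   pair own i = (r, v), is the edge set B i, and has weight mu i. *)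
Definition valid_decomp (Cl Dp : finType) (F : realFieldType) (gamma : F)
  (x : Dp -> Cl -> vtx Cl Dp * vtx Cl Dp -> F) (z : Dp -> Cl -> vtx Cl Dp -> F)
  (I : finType) (own : I -> Dp * Cl) (B : I -> {set vtx Cl Dp * vtx Cl Dp})
  (mu : I -> F) : Prop :=
  (forall i, is_branching (inr (own i).1) (B i)) /\
  (forall i, 0 <= mu i) /\
  (forall i, inl (own i).2 \in bvert (inr (own i).1) (B i)) /\
  (forall r v, \sum_(i | own i == (r, v)) mu i = 2 * gamma * z r v (inl v)) /\
  (forall r v e, \sum_(i | (own i == (r, v)) && (e \in B i)) mu i <= gamma * x r v e) /\
  (forall r v (u : Cl), u != v ->
     gamma * z r v (inl u)
       <= \sum_(i | (own i == (r, v)) && (inl u \in bvert (inr r) (B i))) mu i).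

Definition sample_result (Cl Dp : finType) (I : finType) (own : I -> Dp * Cl)
  (B : I -> {set vtx Cl Dp * vtx Cl Dp}) (w : {set I}) (Qf : seq (seq (vtx Cl Dp))) : Prop :=
  exists Pth : I -> seq (vtx Cl Dp),
    (forall i, i \in w -> is_PB (inr (own i).1) (inl (own i).2) (B i) (Pth i)) /\
    final_coll [seq Pth i | i <- enum w] Qf.

(* probability that exactly the branchings in w are included (independent choices) *)
Definition prob_out (I : finType) (F : realFieldType) (mu : I -> F) (w : {set I}) : F :=
  (\prod_(i in w) mu i) * \prod_(i in ~: w) (1 - mu i).

Definition expected_cost (Cl Dp : finType) (F : realFieldType)
  (c : vtx Cl Dp -> vtx Cl Dp -> F) (I : finType) (mu : I -> F)
  (Fin : {set I} -> seq (seq (vtx Cl Dp))) : F :=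
  \sum_(w : {set I}) prob_out mu w * \sum_(p <- Fin w) pcost c p.

From HB Require Import structures.
From mathcomp Require Import all_boot all_order all_algebra.
From mathcomp Require Import ring lra.
Import Order.TTheory GRing.Theory Num.Theory.
Local Open Scope ring_scope.
Set Implicit Arguments. Unset Strict Implicit. Unset Printing Implicit Defensive.

(* The path P(B) is a shortcut of an Eulerian r-v walk that traverses every
   edge of B once, and every edge off the r-v path of B a second time
   backwards; so c(P(B)) <= 2 c(B) - c(r-v path of B) <= 2 c(B) - c(v,r).
   Removing clients from paths only shortcuts them, so by the triangle
   inequality the final collection costs at most the sum of these bounds over
   the sampled branchings.  Taking expectations, branching i contributes
   mu_i (2 c(B_i) - c(v,r)); the edge capacities bound the first part by
   2 gamma opt_LP, and the weights of the pair (r,v) sum to 2 gamma z^r_{v,v},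
   so the second part equals gamma (1 - delta) opt_LP. *)

Section PathCost.

Variables (T : finType) (F : realFieldType) (c : T -> T -> F).
Hypothesis c_ge0 : forall a b, 0 <= c a b.
Hypothesis c_refl : forall a, c a a = 0.
Hypothesis c_sym : forall a b, c a b = c b a.
Hypothesis c_tri : forall a b d, c a d <= c a b + c b d.

Lemma pcost_nil : pcost c [::] = 0.
Proof. by rewrite /pcost big_nil. Qed.

Lemma pcost_seq1 a : pcost c [:: a] = 0.
Proof. by rewrite /pcost big_nil. Qed.

Lemma pcost_cons a b p : pcost c [:: a, b & p] = c a b + pcost c (b :: p).
Proof. by rewrite /pcost /= big_cons. Qed.

Lemma pcost_ge0 p : 0 <= pcost c p.
Proof. by apply: sumr_ge0 => e _. Qed.

Lemma pcost_behead p a : pcost c p <= pcost c (a :: p).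
Proof. by case: p => [|b p]; rewrite ?pcost_nil ?pcost_ge0 // pcost_cons lerDr. Qed.

Lemma pcost_shortcut a b p : pcost c (a :: p) <= pcost c [:: a, b & p].
Proof.
case: p => [|d p]; first by rewrite pcost_seq1 pcost_ge0.
by rewrite !pcost_cons addrA lerD2r.
Qed.

Lemma pcost_subseq_cons a p q : subseq p q -> pcost c (a :: p) <= pcost c (a :: q).
Proof.
elim: q a p => [|b q IH] a [|d p] //=; rewrite ?pcost_seq1 ?pcost_ge0 //.
case: eqP => [-> /IH | _ /(IH a) le_pq]; first by rewrite !pcost_cons lerD2l.
exact: le_trans le_pq (pcost_shortcut _ _ _).
Qed.

Lemma pcost_subseq p q : subseq p q -> pcost c p <= pcost c q.
Proof.
elim: q p => [|b q IH] [|d p] //=; rewrite ?pcost_nil ?pcost_ge0 //.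
case: eqP => [-> /pcost_subseq_cons // | _ /IH le_pq].
exact: le_trans le_pq (pcost_behead _ _).
Qed.

Lemma dist_le_pcost a p : c a (last a p) <= pcost c (a :: p).
Proof.
elim: p a => [|b p IH] a /=; first by rewrite c_refl pcost_seq1.
by rewrite pcost_cons; apply: le_trans (c_tri a b _) _; rewrite lerD2l.
Qed.

Lemma path_edge_in (E : {set T * T}) a p e :
  path (edge_rel E) a p -> e \in zip (a :: p) p ->
  e \in E /\ connect (edge_rel E) e.2 (last a p).
Proof.
elim: p a => [|b p IH] a //= /andP[ab_E pE].
rewrite in_cons => /orP[/eqP -> | /(IH _ pE) //]; split=> //.
by apply/connectP; exists p.
Qed.

Lemma dist_le_bpath_cost (E : {set T * T}) r v :
  connect (edge_rel E) r v -> c r v <= \sum_(e in bpath_edges v E) c e.1 e.2.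
Proof.
case/connectP=> p0 /shortenP[p pE /andP[_ uniq_p] _] ->.
apply: le_trans (dist_le_pcost r p) _.
rewrite /pcost big_uniq /=; last first.
  by apply: (@map_uniq _ _ snd); rewrite -/(unzip2 _) unzip2_zip.
rewrite [X in _ <= X]big_mkcond [X in X <= _]big_mkcond /=.
apply: ler_sum => e _; case: ifP => [/(path_edge_in pE)[eE e_v] | _].
  by rewrite inE eE e_v.
by case: ifP.
Qed.

Lemma bpath_edges_sub v (E : {set T * T}) : bpath_edges v E \subset E.
Proof. by apply/subsetP => e; rewrite inE => /andP[]. Qed.

Lemma pcost_bwalk (E : {set T * T}) r v s :
  perm_eq (zip (r :: s) s) (bwalk_edges v E) ->
  pcost c (r :: s) = 2 * \sum_(e in E) c e.1 e.2 - \sum_(e in bpath_edges v E) c e.1 e.2.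
Proof.
move=> walk_E; rewrite /pcost /= (perm_big _ walk_E) big_cat big_map !big_enum /=.
rewrite (big_setID (bpath_edges v E)) (setIidPr (bpath_edges_sub v E)) /=.
under [X in _ + X = _]eq_bigr => e _ do rewrite c_sym.
ring.
Qed.

Lemma PB_cost_le (E : {set T * T}) r v p :
  connect (edge_rel E) r v -> is_PB r v E p ->
  pcost c p <= 2 * \sum_(e in E) c e.1 e.2 - c r v.
Proof.
move=> r_v [s [[_ walk_E p_sub _ _] _]].
apply: le_trans (pcost_subseq p_sub) _; rewrite (pcost_bwalk walk_E) lerD2l lerN2.
exact: dist_le_bpath_cost.
Qed.

End PathCost.

Lemma sum_set_nth_le (T : Type) (F : realFieldType) (f : T -> F) (d y : T) Q i :
  (i < size Q)%N -> f y <= f (nth d Q i) ->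
  \sum_(p <- set_nth d Q i y) f p <= \sum_(p <- Q) f p.
Proof.
elim: Q i => [|a Q IH] [|i] //= lt_i le_y; rewrite !big_cons.
  by rewrite lerD2r.
by rewrite lerD2l IH.
Qed.

Section RemovalPhase.

Variables (Cl Dp : finType) (F : realFieldType) (c : vtx Cl Dp -> vtx Cl Dp -> F).
Hypothesis c_ge0 : forall a b, 0 <= c a b.
Hypothesis c_tri : forall a b d, c a d <= c a b + c b d.

Lemma rm_reach_cost_le Q Q' :
  rm_reach Q Q' -> \sum_(p <- Q') pcost c p <= \sum_(p <- Q) pcost c p.
Proof.
elim=> // Q0 Q1 Q2 [u [i [j [[lt_i _ _ _ _] ->]]]] _ /le_trans; apply.
by apply: sum_set_nth_le => //; apply: pcost_subseq => //; apply: rem_subseq.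
Qed.

Lemma final_coll_cost_le Q Qf :
  final_coll Q Qf -> \sum_(p <- Qf) pcost c p <= \sum_(p <- Q) pcost c p.
Proof.
case=> Q' [Q_Q' [_ ->]]; apply: le_trans (rm_reach_cost_le Q_Q').
rewrite big_filter [X in _ <= X](bigID (has (@is_client Cl Dp))) /= lerDl.
by apply: sumr_ge0 => p _; apply: pcost_ge0.
Qed.

End RemovalPhase.

Section Sampling.

Variables (I : finType) (F : realFieldType) (mu : I -> F).

Lemma sum_subsets_prod (a b : I -> F) :
  \sum_(w : {set I}) (\prod_(j in w) a j) * \prod_(j in ~: w) b j = \prod_j (a j + b j).
Proof.
rewrite bigA_distr; apply: eq_bigr => w _.
rewrite [RHS](bigID (mem w)) /=; congr (_ * _); apply: eq_big => j; rewrite ?inE //.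
- by move=> ->.
- by move=> /negbTE ->.
Qed.

Lemma prob_out_mem i : \sum_(w : {set I}) prob_out mu w * (i \in w)%:R = mu i.
Proof.
pose b j := if j == i then 0 else 1 - mu j.
transitivity (\prod_j (mu j + b j)); last first.
  rewrite (bigD1 i) //= /b eqxx addr0 big1 ?mulr1 // => j /negbTE ->.
  by rewrite addrC subrK.
rewrite -sum_subsets_prod; apply: eq_bigr => w _; rewrite /prob_out.
have [i_w | i_notw] := boolP (i \in w).
  rewrite mulr1; congr (_ * _); apply: eq_bigr => j; rewrite inE /b.
  by case: eqP => // ->; rewrite i_w.
by rewrite mulr0 [X in _ * X](bigD1 i) ?inE ?i_notw //= /b eqxx mul0r mulr0.
Qed.

Lemma expected_sum_mem (a : I -> F) :
  \sum_(w : {set I}) prob_out mu w * \sum_(j in w) a j = \sum_j mu j * a j.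
Proof.
transitivity (\sum_(w : {set I}) \sum_j prob_out mu w * (j \in w)%:R * a j).
  apply: eq_bigr => w _; rewrite big_mkcond mulr_sumr; apply: eq_bigr => j _.
  by case: (j \in w); rewrite ?mulr1 ?mulr0 ?mul0r.
by rewrite exchange_big; apply: eq_bigr => j _; rewrite -mulr_suml prob_out_mem.
Qed.

Lemma prob_out_ge0 w : (forall i, 0 <= mu i <= 1) -> 0 <= prob_out mu w.
Proof.
move=> mu01; apply: mulr_ge0; apply: prodr_ge0 => i _.
all: by case/andP: (mu01 i) => mu_ge0 mu_le1; rewrite ?subr_ge0.
Qed.

End Sampling.

Lemma sum_by_owner (I A B : finType) (F : realFieldType) (own : I -> A * B) (G : I -> F) :
  \sum_j G j = \sum_(r : A) \sum_(v : B) \sum_(j | own j == (r, v)) G j.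
Proof. by rewrite (partition_big own xpredT) //= pair_big; apply: eq_bigr => -[]. Qed.

Section Decomposition.

Variables (F : realFieldType) (Cl Dp : finType) (c : vtx Cl Dp -> vtx Cl Dp -> F) (k : nat).
Variables (x : Dp -> Cl -> vtx Cl Dp * vtx Cl Dp -> F) (z : Dp -> Cl -> vtx Cl Dp -> F).
Variables (gamma : F) (I : finType) (own : I -> Dp * Cl).
Variables (B : I -> {set vtx Cl Dp * vtx Cl Dp}) (mu : I -> F).
Hypothesis xz_feasible : lp_feasible c k x z.
Hypothesis decomp : valid_decomp gamma x z own B mu.

Lemma lp_z_le1 r v u : z r v (inl u) <= 1.
Proof.
have [_ [z_ge0 [_ [_ [_ [_ [z_sum1 _]]]]]]] := xz_feasible.
rewrite -(z_sum1 u) (bigD1 r) //= (bigD1 v) //= -addrA lerDl.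
by apply: addr_ge0; apply: sumr_ge0 => *; rewrite ?sumr_ge0.
Qed.

Lemma decomp_weight_le1 i : gamma <= 1 / 2 -> mu i <= 1.
Proof.
move=> gamma_le; have [_ [mu_ge0 [_ [mu_sum _]]]] := decomp.
have [_ [z_ge0 _]] := xz_feasible.
have z_le1 := lp_z_le1 (own i).1 (own i).2 (own i).2.
have := mu_sum (own i).1 (own i).2; rewrite -surjective_pairing (bigD1 i) //=.
have : 0 <= \sum_(j | (own j == own i) && (j != i)) mu j by rewrite sumr_ge0.
have := z_ge0 (own i).1 (own i).2 (inl (own i).2).
nra.
Qed.

Lemma decomp_tree_cost_le :
  (forall a b, 0 <= c a b) ->
  \sum_j mu j * \sum_(e in B j) c e.1 e.2 <= gamma * lp_obj c x.
Proof.
move=> c_ge0; have [branching [_ [_ [_ [edge_cap _]]]]] := decomp.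
rewrite (sum_by_owner own) /lp_obj mulr_sumr; apply: ler_sum => r _.
rewrite mulr_sumr; apply: ler_sum => v _; rewrite mulr_sumr.
have -> : \sum_(j | own j == (r, v)) mu j * \sum_(e in B j) c e.1 e.2 =
    \sum_(e | e.1 != e.2) c e.1 e.2 * \sum_(j | (own j == (r, v)) && (e \in B j)) mu j.
  transitivity (\sum_(j | own j == (r, v)) \sum_(e | e.1 != e.2)
                 (if e \in B j then mu j * c e.1 e.2 else 0)).
    apply: eq_bigr => j _; rewrite mulr_sumr [LHS]big_mkcond [RHS]big_mkcond.
    apply: eq_bigr => e _ /=; case: ifP => e_Bj; last by case: ifP.
    by have [no_loop _] := branching j; rewrite (no_loop e e_Bj).
  rewrite exchange_big; apply: eq_bigr => e _; rewrite -big_mkcondr mulr_sumr.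
  by apply: eq_bigr => j _; rewrite mulrC.
by apply: ler_sum => e _; rewrite mulrCA ler_wpM2l.
Qed.

Lemma decomp_root_cost :
  (forall a b, c a b = c b a) ->
  \sum_j mu j * c (inr (own j).1) (inl (own j).2)
    = gamma * \sum_(r : Dp) \sum_(v : Cl) 2 * c (inl v) (inr r) * z r v (inl v).
Proof.
move=> c_sym; have [_ [_ [_ [mu_sum _]]]] := decomp.
rewrite (sum_by_owner own) mulr_sumr; apply: eq_bigr => r _.
rewrite mulr_sumr; apply: eq_bigr => v _.
rewrite (eq_bigr (fun j => mu j * c (inr r) (inl v))) => [|j /eqP -> //].
by rewrite -mulr_suml mu_sum c_sym; ring.
Qed.

End Decomposition.

Theorem lemma3 (F : realFieldType) (Cl Dp : finType)
  (c : vtx Cl Dp -> vtx Cl Dp -> F) (k : nat)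
  (x : Dp -> Cl -> vtx Cl Dp * vtx Cl Dp -> F) (z : Dp -> Cl -> vtx Cl Dp -> F)
  (gamma delta : F) (I : finType) (own : I -> Dp * Cl)
  (B : I -> {set vtx Cl Dp * vtx Cl Dp}) (mu : I -> F)
  (Fin : {set I} -> seq (seq (vtx Cl Dp))) :
  (0 < #|Cl|)%N -> (0 < #|Dp|)%N -> is_metric c -> (3 <= k)%N ->
  (forall (v : Cl) (r : Dp), 0 < c (inl v) (inr r)) ->
  0 < gamma -> gamma <= 1 / 2 ->
  lp_extreme c k x z -> lp_optimal c k x z ->
  \sum_(r : Dp) \sum_(v : Cl) 2 * c (inl v) (inr r) * z r v (inl v)
    = (1 - delta) * lp_obj c x ->
  valid_decomp gamma x z own B mu ->
  (forall w : {set I}, sample_result own B w (Fin w)) ->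
  expected_cost c mu Fin <= gamma * (1 + delta) * lp_obj c x.
Proof.
move=> _ _ [c_ge0 [c_eq0 [c_sym c_tri]]] _ _ _ gamma_le _ [feasible _] delta_def
  decomp sample.
have c_refl a : c a a = 0 by apply/c_eq0.
have [branching [mu_ge0 [v_in_B _]]] := decomp.
have mu01 i : 0 <= mu i <= 1 by rewrite mu_ge0 (decomp_weight_le1 feasible decomp).
have sampled_cost_le : expected_cost c mu Fin <=
    \sum_j mu j * (2 * \sum_(e in B j) c e.1 e.2 - c (inr (own j).1) (inl (own j).2)).
  rewrite -expected_sum_mem; apply: ler_sum => w _; apply: ler_wpM2l; first exact: prob_out_ge0.
  have [P [P_PB /(final_coll_cost_le c_ge0 c_tri)/le_trans]] := sample w; apply.
  rewrite big_map big_enum /=; apply: ler_sum => j j_w.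
  apply: PB_cost_le (P_PB j j_w) => //.
  by have [_ [_ [_ /(_ _ (v_in_B j))]]] := branching j.
have tree := decomp_tree_cost_le decomp c_ge0.
have root := decomp_root_cost decomp c_sym; rewrite delta_def in root.
have split_cost :
    \sum_j mu j * (2 * \sum_(e in B j) c e.1 e.2 - c (inr (own j).1) (inl (own j).2))
    = 2 * (\sum_j mu j * \sum_(e in B j) c e.1 e.2)
      - \sum_j mu j * c (inr (own j).1) (inl (own j).2).
  by rewrite mulr_sumr -sumrB; apply: eq_bigr => j _; ring.
rewrite split_cost root in sampled_cost_le.
lra.
Qed.
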